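(* Let $p$ be a prime and let $P$ be a nonabelian finite $p$-group on which there exists a transitive saturated fusion system. Then $P$ is indecomposable as a direct product, i.e. $P$ is not the direct product of two nontrivial subgroups.
   Context: A saturated fusion system $\mathcal{F}$ on a finite $p$-group $P$ is called transitive if any two nontrivial elements of $P$ are $\mathcal{F}$-conjugate. *)

From HB Require Import structures.
From mathcomp Require Import all_boot all_order all_fingroup all_solvable.
Set Implicit Arguments. Unset Strict Implicit. Unset Printing Implicit Defensive.
Import GroupScope.
Local Open Scope group_scope.

(* A fusion system over P is encoded as a boolean predicate F Q f meaning
   "f (restricted to Q) is a morphism of F with source Q" (target: any
   subgroup of P containing f(Q), i.e. Hom_F(Q,R) = {f | F Q f, f(Q) <= R}). *)
Section Fusion.
Variable gT : finGroupType.
Implicit Types (P Q R : {set gT}).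

Definition fusion_pred := {set gT} -> {ffun gT -> gT} -> bool.

(* Fusion system (Puig / Aschbacher-Kessar-Oliver Def. I.2.1):
   objects are subgroups of P; morphisms are injective homomorphisms;
   Hom_P(Q,R) <= Hom_F(Q,R); F is closed under composition (category);
   every morphism is an F-isomorphism onto its image (its inverse lies in F)
   followed by an inclusion. Morphisms are considered as maps on Q only. *)
Definition is_fusion_system (P : {set gT}) (F : fusion_pred) : Prop :=
  [/\ (forall Q f, F Q f ->
         [/\ group_set Q, Q \subset P, {in Q &, {morph f : x y / x * y}},
             {in Q &, injective f} & f @: Q \subset P]),
      (forall Q (f g : {ffun gT -> gT}), F Q f -> {in Q, f =1 g} -> F Q g),
      (forall (Q : {group gT}) g, Q \subset P -> g \in P ->
         F Q [ffun x => x ^ g]),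
      (forall Q R f g, F Q f -> F R g -> f @: Q \subset R ->
         F Q [ffun x => g (f x)]) &
      (forall Q f, F Q f ->
         exists g, F (f @: Q) g /\ {in Q, forall x, g (f x) = x})].

Definition Fconjugate (F : fusion_pred) Q R : Prop :=
  exists f, F Q f /\ f @: Q = R.

Definition fully_normalized P (F : fusion_pred) Q : Prop :=
  forall R, Fconjugate F Q R -> #|'N_P(R)| <= #|'N_P(Q)|.

Definition fully_centralized P (F : fusion_pred) Q : Prop :=
  forall R, Fconjugate F Q R -> #|'C_P(R)| <= #|'C_P(Q)|.

Definition AutF (F : fusion_pred) Q : {set {perm gT}} :=
  [set a in Aut Q | F Q [ffun x => a x]].

Definition AutP P Q : {set {perm gT}} :=
  [set a in Aut Q | [exists g in 'N_P(Q), [forall x in Q, a x == x ^ g]]].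

(* N_phi = { g in N_P(Q) | phi c_g phi^-1 in Aut_P(phi(Q)) } *)
Definition Nphi P Q (f : {ffun gT -> gT}) : {set gT} :=
  [set g in 'N_P(Q) |
     [exists h in 'N_P(f @: Q), [forall x in Q, f (x ^ g) == f x ^ h]]].

Definition saturated_fusion_system (p : nat) (P : {set gT}) (F : fusion_pred)
  : Prop :=
  [/\ is_fusion_system P F,
      (forall Q : {group gT}, Q \subset P -> fully_normalized P F Q ->
         fully_centralized P F Q /\ p.-Sylow(AutF F Q) (AutP P Q)) &
      (forall Q (f : {ffun gT -> gT}), F Q f ->
         fully_centralized P F (f @: Q) ->
         exists fb, F (Nphi P Q f) fb /\ {in Q, fb =1 f})].

Definition transitive_fusion (P : {set gT}) (F : fusion_pred) : Prop :=
  forall x y, x \in P -> y \in P -> x != 1 -> y != 1 ->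
    exists f, F <[x]> f /\ f x = y.

End Fusion.

From HB Require Import structures.
From mathcomp Require Import all_boot all_order all_fingroup all_solvable.
Set Implicit Arguments. Unset Strict Implicit. Unset Printing Implicit Defensive.
Import GroupScope.
Local Open Scope group_scope.

(* Suppose P = A x B with A nonabelian and B nontrivial.  Then A has a
   nontrivial central commutator z = [l, a], and B has a nontrivial central
   element w; both z and z w are nontrivial elements of Z(P).  By
   transitivity some F-morphism sends z to z w, and since its source and
   target are central, the extension axiom extends it to an injective
   endomorphism of P.  Hence z w is the commutator [y, g] (g in P) for at
   least as many y in P as z is.  But projecting onto A shows that every
   such y for z w is one for z, while l works for z and not for z w. *)

Lemma nil_central_commg (gT : finGroupType) (A : {group gT}) :
  nilpotent A -> ~~ abelian A ->
  exists l a, [/\ l \in A, a \in A, [~ l, a] != 1 & [~ l, a] \in 'Z(A)].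
Proof.
move=> nilA nabA.
have : ~~ ('Z_2(A) \subset 'Z(A)).
  apply: contra nabA => sZ2Z.
  have trZ : 'Z(A / 'Z(A)) :==: 1.
    rewrite -ucn1 -ucn_central eqEsubset sub1G quotient_sub1 ?andbT.
      by move: sZ2Z; rewrite -ucn1.
    by have /andP[] := ucn_normalS 1 A.
  move: trZ; rewrite center_nil_eq1 ?quotient_center_nil // eqEsubset.
  rewrite quotient_sub1 ?normal_norm ?center_normal //.
  by case/andP=> /subsetIP[_ cAA] _.
case/subsetPn=> l Z2l nZl; have Al := subsetP (ucn_sub 2 A) l Z2l.
have [a Aa ntla] : exists2 a, a \in A & [~ l, a] != 1.
  apply/exists_inP; apply: contraR nZl => /exists_inPn cAl.
  by apply/centerP; split=> // a /cAl /negbNE /commgP.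
exists l, a; split=> //.
by rewrite -ucn1 (subsetP (ucn_comm 1 A)) // mem_commg.
Qed.

Section CentralFusion.

Variables (gT : finGroupType) (P : {group gT}) (F : fusion_pred gT).
Implicit Types (Q : {set gT}) (f : {ffun gT -> gT}).

Lemma Nphi_cent Q f : P \subset 'C(Q) -> Nphi P Q f = P.
Proof.
move=> cPQ; apply/setP=> g; rewrite inE (setIidPl (cents_norm cPQ)).
apply/andb_idr=> Pg; apply/exists_inP; exists 1; first exact: group1.
apply/forall_inP=> x Qx; have /centP cgQ := subsetP cPQ g Pg.
by rewrite conjg1 conjgE -(cgQ x Qx) mulKg.
Qed.

Lemma fully_centralized_cent Q : P \subset 'C(Q) -> fully_centralized P F Q.
Proof.
move=> cPQ R _; rewrite (setIidPl cPQ).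
exact/subset_leq_card/subsetIl.
Qed.

Lemma saturated_cent_extension p Q f :
  saturated_fusion_system p P F -> F Q f ->
  P \subset 'C(Q) -> P \subset 'C(f @: Q) ->
  exists fb, F P fb /\ {in Q, fb =1 f}.
Proof.
case=> _ _ extF Ff cPQ cPfQ.
have [fb [Ffb fbf]] := extF Q f Ff (fully_centralized_cent cPfQ).
by exists fb; rewrite -(Nphi_cent f cPQ).
Qed.

Lemma transitive_center_morph p z1 z2 :
  saturated_fusion_system p P F -> transitive_fusion P F ->
  z1 \in 'Z(P) -> z2 \in 'Z(P) -> z1 != 1 -> z2 != 1 ->
  exists fb, F P fb /\ fb z1 = z2.
Proof.
move=> satF trF /setIP[Pz1 Cz1] /setIP[Pz2 Cz2] ntz1 ntz2.
have [f [Ff fz1]] := trF z1 z2 Pz1 Pz2 ntz1 ntz2.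
have [[axF _ _ _ _] _ _] := satF; have [_ _ fM _ _] := axF _ _ Ff.
have im_f : f @: <[z1]> = <[z2]>.
  by rewrite -fz1 -(morphim_cycle (Morphism fM)) ?cycle_id // morphimEdom.
have cPz z : z \in 'C(P) -> P \subset 'C(<[z]>) by rewrite centsC cycle_subG.
have [|fb [Ffb fbf]] := saturated_cent_extension satF Ff (cPz z1 Cz1).
  by rewrite im_f cPz.
by exists fb; rewrite fbf ?cycle_id.
Qed.

End CentralFusion.

Section CommutatorFactors.

Variable gT : finGroupType.
Implicit Types (P A B : {group gT}) (x : gT).

Definition commg_lfactors (P : {set gT}) x :=
  [set y in P | [exists g in P, [~ y, g] == x]].

Lemma card_commg_lfactors_injm P (f : {morphism P >-> gT}) x :
  'injm f -> f @* P \subset P ->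
  #|commg_lfactors P x| <= #|commg_lfactors P (f x)|.
Proof.
move=> /injmP injf sfPP.
have fP y : y \in P -> f y \in P by move=> Py; rewrite (subsetP sfPP) ?mem_morphim.
rewrite -(card_in_imset (f := f)); last by move=> y1 y2 /setIdP[? _] /setIdP[? _]; apply: injf.
apply/subset_leq_card/subsetP=> _ /imsetP[y /setIdP[Py /exists_inP[g Pg /eqP <-]] ->].
by rewrite inE fP //=; apply/exists_inP; exists (f g); rewrite ?fP // morphR.
Qed.

Lemma commg_lfactors_dprodM A B P x w :
  A \x B = P -> x \in A -> w \in B ->
  commg_lfactors P (x * w) \subset commg_lfactors P x.
Proof.
move=> defP Ax Bw; have [_ defAB cAB tiAB] := dprodP defP.
have [nsAP _] := dprod_normal2 defP.
have complB : B \in [complements to A in P] by apply/complP.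
have pAR : {in P &, {morph divgr A B : u v / [~ u, v]}}.
  exact: morphR (Morphism (divgrM complB cAB)).
apply/subsetP=> y /setIdP[Py /exists_inP[g Pg /eqP yg]].
have Ag' : divgr A B g \in A by rewrite mem_divgr ?defAB.
have Pg' : divgr A B g \in P by rewrite (subsetP (normal_sub nsAP)).
rewrite inE Py; apply/exists_inP; exists (divgr A B g) => //.
have Ayg' : [~ y, divgr A B g] \in A.
  by rewrite (subsetP (_ : [~: P, A] \subset A)) ?mem_commg ?commg_subr ?normal_norm.
by rewrite -(divgr_id B Ayg') pAR // (divgr_id B Ag') -pAR // yg divgrMid.
Qed.

Lemma commg_lfactors_dprod_proper A B P l a w :
  A \x B = P -> l \in A -> a \in A -> w \in B -> w != 1 ->
  commg_lfactors P ([~ l, a] * w) \proper commg_lfactors P [~ l, a].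
Proof.
move=> defP Al Aa Bw ntw; have [_ _ _ tiAB] := dprodP defP.
have [nsAP _] := dprod_normal2 defP; have sAP := normal_sub nsAP.
rewrite properE (commg_lfactors_dprodM defP) ?groupR //=; apply/subsetPn; exists l.
  by rewrite inE (subsetP sAP) //=; apply/exists_inP; exists a; rewrite ?(subsetP sAP).
apply: contra ntw => /setIdP[_ /exists_inP[g Pg /eqP lgw]].
have Alg : [~ l, g] \in A.
  by rewrite (subsetP (_ : [~: A, P] \subset A)) ?mem_commg ?commg_subl ?normal_norm.
suff: w \in A :&: B by rewrite tiAB => /set1gP ->.
by rewrite inE Bw andbT -(groupMl _ (groupR Al Aa)) -lgw.
Qed.

End CommutatorFactors.

Lemma card_commg_lfactors_fusion (gT : finGroupType) (P : {group gT})
    (F : fusion_pred gT) (f : {ffun gT -> gT}) x :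
  is_fusion_system P F -> F P f ->
  #|commg_lfactors P x| <= #|commg_lfactors P (f x)|.
Proof.
move=> [axF _ _ _ _] Ff; have [_ _ fM injf sfP] := axF _ _ Ff.
have injfm : 'injm (Morphism fM) by apply/injmP.
by have := card_commg_lfactors_injm x injfm; rewrite morphimEdom; apply.
Qed.

Lemma transitive_dprod_nonabelian (p : nat) (gT : finGroupType)
    (P A B : {group gT}) (F : fusion_pred gT) :
  p.-group P -> saturated_fusion_system p P F -> transitive_fusion P F ->
  A \x B = P -> ~~ abelian A -> B :=: 1.
Proof.
move=> pP satF trF defP nabA; apply/eqP; apply: contraT => ntB.
have [_ _ _ tiAB] := dprodP defP; have [nsAP nsBP] := dprod_normal2 defP.
have [l [a [Al Aa ntz Zz]]] :=
  nil_central_commg (pgroup_nil (pgroupS (normal_sub nsAP) pP)) nabA.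
have [w Zw ntw] : exists2 w, w \in 'Z(B) & w != 1.
  apply/trivgPn; apply: contra ntB => /eqP.
  by move/(trivg_center_pgroup (pgroupS (normal_sub nsBP) pP)) ->.
have Bw := subsetP (center_sub B) w Zw.
have [_ defZ _ _] := dprodP (center_dprod defP).
have ZPz : [~ l, a] \in 'Z(P) by rewrite -defZ (subsetP (mulG_subl _ _)).
have ZPzw : [~ l, a] * w \in 'Z(P) by rewrite -defZ mem_mulg.
have ntzw : [~ l, a] * w != 1.
  apply: contra ntw => /eqP zw1.
  by rewrite -(remgrMid tiAB (groupR Al Aa) Bw) zw1 remgr1.
have [fb [Ffb fbz]] := transitive_center_morph satF trF ZPz ZPzw ntz ntzw.
have [fusF _ _] := satF; have := card_commg_lfactors_fusion [~ l, a] fusF Ffb.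
by rewrite fbz leqNgt proper_card ?(commg_lfactors_dprod_proper defP).
Qed.

Theorem proposition2p2 (p : nat) (gT : finGroupType) (P : {group gT})
    (F : fusion_pred gT) :
  prime p -> (p.-group P)%g -> ~~ abelian P ->
  saturated_fusion_system p P F -> transitive_fusion P F ->
  forall A B : {group gT}, (A \x B)%g = P -> (A :=: 1)%g \/ (B :=: 1)%g.
Proof.
move=> _ pP nabP satF trF A B defP; have [_ defAB cAB _] := dprodP defP.
case abA: (abelian A).
  have defP' : B \x A = P by rewrite dprodC.
  left; apply: (transitive_dprod_nonabelian pP satF trF defP').
  by apply: contra nabP => abB; rewrite -defAB abelianM abA abB cAB.
by right; apply: (transitive_dprod_nonabelian pP satF trF defP); rewrite abA.
Qed.
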